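(* Let $k$ be a real number. For every $s\in\mathbb{C}$ with $\mathrm{Re}(s)>\max(1,1+k)$, $$\sum_{n\geq1}\frac{\Omega(n)\beta_k(n)}{n^s}=\zeta(s)P(s-k)\bigl(P_\Omega(s)+1\bigr).$$
   Context: $\Omega(n)$ is the number of prime factors of $n$ counted with multiplicity; $\beta_k(n)=\sum_{p\mid n}p^k$ (sum over distinct primes dividing $n$). $\zeta(s)=\sum_{n\geq1}n^{-s}$ is the Riemann zeta function, $P(s)=\sum_p p^{-s}$ is the prime zeta function, and $P_\Omega(s)=\sum_p\frac{\Omega(p)}{p^s-1}=\sum_p\frac1{p^s-1}$, sums over all primes $p$. *)

From Stdlib Require Import Reals.
From Coquelicot Require Import Coquelicot.
From mathcomp Require Import ssreflect ssrbool ssrnat seq prime bigop.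

Definition Omega (n : nat) : nat := (\sum_(p <- primes n) logn p n)%N.

Definition beta (k : R) (n : nat) : R :=
  \big[Rplus/0%R]_(p <- primes n) Rpower (INR p) k.

(* Complex power x^s = exp(s ln x) for real x > 0 and complex s. *)
Definition cpow (x : R) (s : C) : C :=
  (exp (Re s * ln x) * cos (Im s * ln x),
   exp (Re s * ln x) * sin (Im s * ln x))%R.

(* Terms of the Dirichlet series (index shifted: term n is for n+1). *)
Definition zeta_term (s : C) (n : nat) : C := cpow (INR n.+1) (- s)%C.

Definition primezeta_term (s : C) (n : nat) : C :=
  if prime n then cpow (INR n) (- s)%C else 0%C.

(* P_Omega(s) = sum_p Omega(p)/(p^s - 1) = sum_p 1/(p^s - 1). *)
Definition POmega_term (s : C) (n : nat) : C :=
  if prime n then (INR (Omega n) / (cpow (INR n) s - 1))%C else 0%C.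

Definition lhs_term (k : R) (s : C) (n : nat) : C :=
  (RtoC (INR (Omega n.+1) * beta k n.+1) * cpow (INR n.+1) (- s))%C.

(* Write 1_P and 1_PP for the indicators of the primes and of the prime powers p^j (j >= 1),
   and * for Dirichlet convolution.  For every prime p dividing n, Omega(n) = Omega(n/p) + 1, hence
   Omega(n) beta_k(n) = sum_(p | n) p^k (Omega(n/p) + 1), i.e. Omega beta_k = (p^k 1_P) * (Omega + 1).
   A number n has exactly Omega(n) prime-power divisors, so Omega + 1 = 1 * (delta_1 + 1_PP).
   Grouping the prime powers by their prime, the Dirichlet series of 1_PP is
   sum_p sum_(j >= 1) p^(-js) = sum_p 1/(p^s - 1) = P_Omega(s).  All the series involved are dominated
   by sum_n n^(-Re s) (resp. n^(-(Re s - k))), which converges, and the Dirichlet series of a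
   convolution of absolutely convergent series is the product of their sums.  Both this product
   formula and the grouping by primes are instances of a single interchange lemma for absolutely
   summable double series supported on a triangle. *)

From Stdlib Require Import Reals Lra Lia.
From Coquelicot Require Import Coquelicot.
From HB Require Import structures.
From mathcomp Require Import ssreflect ssrfun ssrbool eqtype ssrnat seq div fintype prime bigop.
From mathcomp Require Import zify.
Set Implicit Arguments.
Unset Strict Implicit.

(** * Prime-power divisors and Omega *)

Section PrimePowers.
Local Open Scope nat_scope.

(* Equals 1 if m is a prime power p^(j+1) and 0 otherwise; neither p nor j exceeds m. *)
Definition prime_power_count (m : nat) : nat :=
  \sum_(p < m.+1 | prime p) \sum_(j < m.+1) (m == p ^ j.+1).

Lemma big_ord_widen0 (n m : nat) (F : nat -> nat) : n <= m ->
  (forall i, n <= i < m -> F i = 0) -> \sum_(i < n) F i = \sum_(i < m) F i.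
Proof.
move=> le_nm F0; rewrite (big_ord_widen m F le_nm) big_mkcond; apply: eq_bigr => i _.
by case: (ltnP i n) => // le_ni; rewrite F0 ?le_ni ?ltn_ord.
Qed.

Lemma prime_power_count_widen (e M : nat) : e <= M ->
  prime_power_count e = \sum_(p < M.+1 | prime p) \sum_(j < M.+1) (e == p ^ j.+1).
Proof.
move=> le_eM; rewrite /prime_power_count big_mkcond.
have no_large_exponent p j : prime p -> e < j -> (e == p ^ j.+1) = false.
  move=> pr_p lt_ej; apply/negbTE/eqP => def_e.
  by have := ltn_expl j.+1 (prime_gt1 pr_p); rewrite -def_e; lia.
have no_large_prime p j : prime p -> e < p -> (e == p ^ j.+1) = false.
  move=> pr_p lt_ep; apply/negbTE/eqP => def_e.
  by have := leq_pexp2l (prime_gt0 pr_p) (ltn0Sn j); rewrite expn1 -def_e; lia.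
transitivity (\sum_(p < e.+1) if prime p then \sum_(j < M.+1) (e == p ^ j.+1) else 0).
  apply: eq_bigr => p _; case: ifP => // pr_p.
  apply: (@big_ord_widen0 e.+1 M.+1 (fun j => e == p ^ j.+1)) => // j /andP [lt_ej _].
  by rewrite no_large_exponent.
rewrite [RHS]big_mkcond; apply: (@big_ord_widen0 e.+1 M.+1 (fun p => if prime p then
  \sum_(j < M.+1) (e == p ^ j.+1) else 0)) => // p /andP [lt_ep _].
case: ifP => // pr_p.
by apply: big1 => j _; rewrite no_large_prime.
Qed.

Lemma sum_divisors_quotient_eq (m e : nat) : 0 < m -> 0 < e ->
  \sum_(d < m.+1 | d %| m) (m %/ d == e) = (e %| m).
Proof.
move=> m_gt0 e_gt0; have [e_dvd_m | e_ndvd_m] := boolP (e %| m); last first.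
  apply: big1 => d d_dvd_m; apply/eqP; rewrite eqb0; apply: contra e_ndvd_m => /eqP <-.
  exact: dvdn_div.
have lt_qm : m %/ e < m.+1 by rewrite ltnS leq_div.
have q_gt0 : 0 < m %/ e by rewrite divn_gt0 // dvdn_leq.
rewrite (bigD1 (Ordinal lt_qm)) /=; last by rewrite -{2}(divnK e_dvd_m) dvdn_mulr.
rewrite -{1}(divnK e_dvd_m) mulKn // eqxx big1 // => d /andP [d_dvd_m ne_d].
apply/eqP; rewrite eqb0; apply: contra ne_d => /eqP def_e.
by apply/eqP/val_inj; rewrite /= -def_e -{2}(divnK d_dvd_m) mulKn // def_e.
Qed.

Lemma sum_ord_ltn (N L : nat) : \sum_(j < N) (j < L) = minn L N.
Proof.
elim: N => [|N IH]; first by rewrite big_ord0 minn0.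
by rewrite big_ord_recr /= IH; case: (ltnP N L) => /=; lia.
Qed.

Lemma sum_pfactor_dvdn (p m : nat) : prime p -> 0 < m ->
  \sum_(j < m.+1) (p ^ j.+1 %| m) = logn p m.
Proof.
move=> pr_p m_gt0.
rewrite (eq_bigr (fun j : 'I_m.+1 => nat_of_bool (j < logn p m))); last first.
  by move=> j _; rewrite pfactor_dvdn.
rewrite sum_ord_ltn; apply/minn_idPl.
have := dvdn_leq m_gt0 (pfactor_dvdnn p m).
have := ltn_expl (logn p m) (prime_gt1 pr_p); lia.
Qed.

Lemma perm_primes_iota (n B : nat) : 0 < n -> n <= B ->
  perm_eq (primes n) [seq p <- iota 0 B.+1 | p \in primes n].
Proof.
move=> n_gt0 le_nB; apply: uniq_perm; first exact: primes_uniq.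
  by rewrite filter_uniq // iota_uniq.
move=> p; rewrite mem_filter mem_iota; case: (boolP (p \in primes n)) => //= p_in.
by move: p_in; rewrite mem_primes => /and3P [_ _ /(dvdn_leq n_gt0)]; lia.
Qed.

Lemma Omega_ord (n B : nat) : 0 < n -> n <= B ->
  Omega n = \sum_(p < B.+1 | prime p) logn p n.
Proof.
move=> n_gt0 le_nB; rewrite /Omega (perm_big _ (perm_primes_iota n_gt0 le_nB)).
rewrite big_filter -(big_mkord (fun p => prime p) (fun p => logn p n)) /index_iota subn0.
rewrite big_mkcond [RHS]big_mkcond; apply: eq_bigr => p _.
case: (boolP (p \in primes n)) => p_div.
  by move: (p_div); rewrite mem_primes => /and3P [-> _ _].
by case: (boolP (prime p)) => // pr_p; apply/esym/eqP; rewrite -leqn0 leqNgt logn_gt0.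
Qed.

Lemma OmegaM (a b : nat) : 0 < a -> 0 < b -> Omega (a * b) = Omega a + Omega b.
Proof.
move=> a_gt0 b_gt0; have ab_gt0 : 0 < a * b by rewrite muln_gt0 a_gt0.
rewrite (Omega_ord ab_gt0 (leqnn _)) (Omega_ord a_gt0 (leq_pmulr _ b_gt0)).
rewrite (Omega_ord b_gt0 (leq_pmull _ a_gt0)) -big_split /=.
by apply: eq_bigr => p _; rewrite lognM.
Qed.

Lemma Omega_prime (p : nat) : prime p -> Omega p = 1.
Proof. by move=> pr_p; rewrite /Omega primes_prime // big_seq1 logn_prime // eqxx. Qed.

Lemma Omega_divn_prime (p n : nat) : prime p -> p %| n -> 0 < n ->
  Omega n = (Omega (n %/ p)).+1.
Proof.
move=> pr_p p_dvd_n n_gt0.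
have q_gt0 : 0 < n %/ p by rewrite divn_gt0 ?prime_gt0 // dvdn_leq.
by rewrite -{1}(divnK p_dvd_n) (OmegaM q_gt0 (prime_gt0 pr_p)) (Omega_prime pr_p) addn1.
Qed.

Lemma sum_divisors_prime_power_count (m : nat) : 0 < m ->
  \sum_(d < m.+1 | d %| m) prime_power_count (m %/ d) = Omega m.
Proof.
move=> m_gt0; rewrite (Omega_ord m_gt0 (leqnn m)).
rewrite (eq_bigr (fun d : 'I_m.+1 => \sum_(p < m.+1 | prime p)
  \sum_(j < m.+1) (m %/ d == p ^ j.+1))); last first.
  by move=> d _; apply: prime_power_count_widen; apply: leq_div.
rewrite exchange_big /=; apply: eq_bigr => p pr_p.
rewrite exchange_big /= -(sum_pfactor_dvdn pr_p m_gt0); apply: eq_bigr => j _.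
by rewrite sum_divisors_quotient_eq // expn_gt0 prime_gt0.
Qed.

End PrimePowers.

Local Open Scope R_scope.

Lemma cpowM (x y : R) (s : C) : 0 < x -> 0 < y ->
  cpow (x * y) s = (cpow x s * cpow y s)%C.
Proof.
move=> x_gt0 y_gt0; rewrite /cpow ln_mult //.
apply: injective_projections; rewrite /= !Rmult_plus_distr_l exp_plus ?cos_plus ?sin_plus; ring.
Qed.

Lemma Cmod_cpow (x : R) (s : C) : Cmod (cpow x s) = Rpower x (Re s).
Proof.
rewrite /cpow /Cmod /Rpower /=.
have := exp_pos (Re s * ln x); have := sin2_cos2 (Im s * ln x); rewrite /Rsqr => sc ex.
by apply: sqrt_lem_1; nra.
Qed.

Lemma cpow1l (s : C) : cpow 1 s = 1%C.
Proof.
rewrite /cpow ln_1 !Rmult_0_r exp_0 cos_0 sin_0.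
by apply: injective_projections; rewrite /=; ring.
Qed.

Lemma cpow_opp_sub_real (x k : R) (s : C) : 0 < x ->
  cpow x (- (s - RtoC k))%C = (RtoC (Rpower x k) * cpow x (- s))%C.
Proof.
move=> x_gt0; rewrite /cpow /Rpower /Re /Im /=.
replace (- (s.1 + - k) * ln x) with (k * ln x + - s.1 * ln x) by ring.
replace (- (s.2 + - 0) * ln x) with (- s.2 * ln x) by ring.
by rewrite exp_plus; apply: injective_projections; rewrite /=; ring.
Qed.

Lemma cpow_mul_opp (x : R) (s : C) : (cpow x s * cpow x (- s))%C = 1%C.
Proof.
rewrite /cpow /=.
have -> : - Re s * ln x = - (Re s * ln x) by ring.
have -> : - Im s * ln x = - (Im s * ln x) by ring.
rewrite cos_neg sin_neg exp_Ropp.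
have := exp_pos (Re s * ln x); have := sin2_cos2 (Im s * ln x); rewrite /Rsqr => sc ex.
by apply: injective_projections; rewrite /=; field_simplify; lra.
Qed.

Lemma cpowX (x : R) (s : C) (j : nat) : 0 < x -> cpow (x ^ j) s = Cpow (cpow x s) j.
Proof.
move=> x_gt0; elim: j => [|j IH] /=; first exact: cpow1l.
by rewrite cpowM ?IH //; apply: pow_lt.
Qed.

Lemma INR_expn (p n : nat) : INR (p ^ n)%N = INR p ^ n.
Proof. by elim: n => [|n IH] //=; rewrite expnS mult_INR IH. Qed.

(** * Dirichlet convolution *)

(* Lets the bigop lemmas rewrite [beta], a big sum over [Rplus]. *)
HB.instance Definition _ := Monoid.isComLaw.Build R 0%R Rplus
  (fun x y z => esym (Rplus_assoc x y z)) Rplus_comm Rplus_0_l.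

(* n^-s, with the junk value 0 at n = 0 so that Dirichlet series are summed over all of nat. *)
Definition ncpow (s : C) (n : nat) : C := if n == 0%N then RtoC 0 else cpow (INR n) (- s)%C.

Definition dirichlet (s : C) (c : nat -> R) (n : nat) : C := (RtoC (c n) * ncpow s n)%C.

Definition dirichlet_conv {K : Ring} (a b : nat -> K) (n : nat) : K :=
  sum_n (fun d => if d %| n then mult (a d) (b (n %/ d)) else zero) n.

Lemma dirichlet0 (s : C) (c : nat -> R) : dirichlet s c 0%N = RtoC 0.
Proof. by rewrite /dirichlet /ncpow /= Cmult_0_r. Qed.

Lemma dirichlet_conv0 {K : Ring} (a b : nat -> K) : a 0%N = zero -> dirichlet_conv a b 0%N = zero.
Proof. by move=> a0; rewrite /dirichlet_conv sum_O dvdn0 a0 mult_zero_l. Qed.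

Lemma eq_dirichlet_conv {K : Ring} (a b b' : nat -> K) (n : nat) : (forall m, b m = b' m) ->
  dirichlet_conv a b n = dirichlet_conv a b' n.
Proof. by move=> eq_b; apply: sum_n_ext => d; rewrite eq_b. Qed.

Lemma ncpowM (s : C) (d e : nat) : (0 < d)%N -> (0 < e)%N ->
  ncpow s (d * e) = (ncpow s d * ncpow s e)%C.
Proof.
move=> d_gt0 e_gt0; rewrite /ncpow muln_eq0 !eqn0Ngt d_gt0 e_gt0 /= mult_INR.
by rewrite cpowM //; apply: lt_0_INR; apply/ltP.
Qed.

Lemma RtoC_sum_n (f : nat -> R) (N : nat) :
  RtoC (sum_n f N) = sum_n (fun i => RtoC (f i)) N.
Proof.
elim: N => [|N IH]; first by rewrite !sum_O.
by rewrite !sum_Sn -IH /plus /= RtoC_plus.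
Qed.

Lemma sum_n_Cmult_r (u : nat -> C) (c : C) (N : nat) :
  (sum_n u N * c)%C = sum_n (fun i => u i * c)%C N.
Proof. exact: esym (@sum_n_mult_r C_Ring c u N). Qed.

Lemma dirichlet_conv_dirichlet (s : C) (c1 c2 : nat -> R) (n : nat) :
  dirichlet_conv (dirichlet s c1) (dirichlet s c2) n = dirichlet s (dirichlet_conv c1 c2) n.
Proof.
case: n => [|n].
  rewrite /dirichlet_conv /dirichlet !sum_O /= /ncpow /=.
  by apply: injective_projections => /=; ring.
rewrite /dirichlet {2}/dirichlet_conv RtoC_sum_n sum_n_Cmult_r.
apply: sum_n_ext => d; case: (boolP (d %| n.+1)) => d_dvd; last by rewrite /mult /= Cmult_0_l.
have d_gt0 : (0 < d)%N by case: d d_dvd; rewrite ?dvd0n.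
have q_gt0 : (0 < n.+1 %/ d)%N by rewrite divn_gt0 // dvdn_leq.
have -> : ncpow s n.+1 = (ncpow s d * ncpow s (n.+1 %/ d))%C.
  by rewrite -ncpowM // mulnC divnK.
rewrite /mult /= RtoC_mult.
by apply: injective_projections => /=; ring.
Qed.

Lemma sum_n_dirichlet_conv {K : Ring} (a b : nat -> K) : a 0%N = zero -> b 0%N = zero ->
  forall N, sum_n (dirichlet_conv a b) N = sum_n (fun d => mult (a d) (sum_n b (N %/ d))) N.
Proof.
move=> a0 b0; elim=> [|N IH].
  by rewrite !sum_O /dirichlet_conv sum_O a0 !mult_zero_l.
rewrite sum_Sn IH.
have step d : (d <= N.+1)%coq_nat -> mult (a d) (sum_n b (N.+1 %/ d)) =
    plus (mult (a d) (sum_n b (N %/ d)))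
         (if d %| N.+1 then mult (a d) (b (N.+1 %/ d)) else zero).
  move=> _; case: d => [|d]; first by rewrite a0 !mult_zero_l dvd0n plus_zero_r.
  rewrite divnS //; case: (d.+1 %| N.+1) => /=; last by rewrite add0n plus_zero_r.
  by rewrite add1n sum_Sn mult_distr_l.
rewrite (sum_n_ext_loc _ _ _ step) sum_n_plus sum_Sn.
by rewrite divn_small ?ltnSn // sum_O b0 mult_zero_r plus_zero_r.
Qed.

Lemma sum_n_INR (P : pred nat) (F : nat -> nat) (N : nat) :
  sum_n (fun i => if P i then INR (F i) else 0) N = INR (\sum_(i < N.+1 | P i) F i).
Proof.
elim: N => [|N IH].
  by rewrite sum_O big_mkcond big_ord_recr big_ord0 /= add0n; case: (P 0%N).
rewrite sum_Sn IH [in RHS]big_mkcond big_ord_recr /= -big_mkcond plus_INR /plus /=.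
by case: (P N.+1).
Qed.

Lemma sum_n_iota (f : nat -> R) (N : nat) : sum_n f N = \big[Rplus/0]_(i <- iota 0 N.+1) f i.
Proof.
elim: N => [|N IH]; first by rewrite sum_O big_seq1.
by rewrite sum_Sn IH -[N.+2]addn1 iotaD big_cat big_seq1 add0n.
Qed.

Definition prime_rpow (k : R) (m : nat) : R := if prime m then Rpower (INR m) k else 0.

Definition delta1_prime_power (m : nat) : R := INR ((m == 1%N) + prime_power_count m).

Lemma dirichlet_conv_one_delta1_prime_power (m : nat) : (0 < m)%N ->
  dirichlet_conv (fun _ => 1) delta1_prime_power m = INR (Omega m) + 1.
Proof.
move=> m_gt0; rewrite /dirichlet_conv /delta1_prime_power.
under sum_n_ext => d do rewrite /mult /= Rmult_1_l -/(if d %| m then _ else 0).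
rewrite (sum_n_INR (fun d => d %| m)) big_split /= sum_divisors_prime_power_count //.
by rewrite sum_divisors_quotient_eq // dvd1n add1n S_INR.
Qed.

Lemma dirichlet_conv_prime_rpow (k : R) (b : nat -> R) (n : nat) :
  (forall m, (0 < m)%N -> b m = INR (Omega m) + 1) -> (0 < n)%N ->
  dirichlet_conv (prime_rpow k) b n = INR (Omega n) * beta k n.
Proof.
move=> b_Omega n_gt0; rewrite /dirichlet_conv.
transitivity (sum_n (fun e => INR (Omega n) * (if e \in primes n then Rpower (INR e) k else 0)) n).
  apply: sum_n_ext => e; rewrite mem_primes n_gt0 andbC /=.
  case: (boolP (e %| n)) => /= [e_dvd|_]; last by rewrite /zero /=; ring.
  rewrite /prime_rpow /mult /=; case: (boolP (prime e)) => [pr_e|_]; last by ring.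
  have q_gt0 : (0 < n %/ e)%N by rewrite divn_gt0 ?prime_gt0 // dvdn_leq.
  by rewrite b_Omega // (Omega_divn_prime pr_e e_dvd n_gt0) S_INR; ring.
rewrite sum_n_mult_l /mult /= sum_n_iota /beta.
by rewrite (perm_big _ (perm_primes_iota n_gt0 (leqnn n))) big_filter [in RHS]big_mkcond.
Qed.

Lemma sum_n_m_ge0 (r : nat -> R) (n m : nat) : (forall k, 0 <= r k) -> 0 <= sum_n_m r n m.
Proof.
move=> r_ge0; apply: Rle_trans (sum_n_m_le (fun _ => 0) r n m r_ge0).
by rewrite (@sum_n_m_const_zero R_AbelianMonoid); apply: Rle_refl.
Qed.

Lemma sum_n_split (r : nat -> R) (Q M : nat) : (Q <= M)%N ->
  sum_n r M = sum_n r Q + sum_n_m r Q.+1 M.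
Proof.
move=> /leP le_QM; rewrite (@sum_n_m_sum_n R_AbelianGroup) //.
exact: esym (Rplus_minus _ _).
Qed.

Lemma sum_n_le_Series (r : nat -> R) (N : nat) : (forall k, 0 <= r k) -> ex_series r ->
  sum_n r N <= Series r.
Proof.
move=> r_ge0 r_sum.
apply: (is_lim_seq_le (fun _ => sum_n r N) (fun M => sum_n r (M + N)) (sum_n r N) (Series r)).
- move=> M; rewrite (sum_n_split r (leq_addl M N)); have := sum_n_m_ge0 N.+1 (M + N) r_ge0; lra.
- exact: is_lim_seq_const.
- by apply/(is_lim_seq_incr_n (sum_n r) N); apply: Series_correct.
Qed.

Lemma sum_n_m_le_tail (r : nat -> R) (Q M : nat) : (forall k, 0 <= r k) -> ex_series r ->
  sum_n_m r Q.+1 M <= Series r - sum_n r Q.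
Proof.
move=> r_ge0 r_sum; have partial_le := sum_n_le_Series _ r_ge0 r_sum.
have [le_QM | lt_MQ] := leqP Q M.
  by have := partial_le M; rewrite (sum_n_split r le_QM); lra.
by rewrite sum_n_m_zero; [have := partial_le Q; rewrite /zero /=; lra | lia].
Qed.

Lemma is_lim_seq_Series_tail (r : nat -> R) : ex_series r ->
  is_lim_seq (fun Q => Series r - sum_n r Q) 0.
Proof.
move=> r_sum; rewrite -(Rminus_eq_0 (Series r)).
exact: is_lim_seq_minus' (is_lim_seq_const _) (Series_correct _ r_sum).
Qed.

Lemma ex_series_ge0_bounded (r : nat -> R) (M : R) : (forall n, 0 <= r n) ->
  (forall N, sum_n r N <= M) -> ex_series r.
Proof.
move=> r_ge0 r_bounded; apply: ex_series_Reals_1; apply: growing_cv.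
  by move=> n /=; have := r_ge0 n.+1; lra.
by exists M => _ [n ->]; rewrite -sum_n_Reals.
Qed.

Lemma sum_n_point {G : AbelianMonoid} (M : nat) (c : G) (N : nat) : (M <= N)%N ->
  sum_n (fun m => if m == M then c else zero) N = c.
Proof.
elim: N => [|N IH] le_MN.
  by rewrite sum_O; move: le_MN; rewrite leqn0 => /eqP ->.
rewrite sum_Sn; case: eqP => [eq_M|ne_M].
  rewrite (sum_n_ext_loc _ (fun _ => zero)) /sum_n ?sum_n_m_const_zero ?plus_zero_l //.
  move=> m /leP le_mN.
  by case: eqP => // eq_m; move: le_mN; rewrite eq_m -eq_M ltnn.
rewrite IH ?plus_zero_r //; move: le_MN; rewrite leq_eqVlt => /orP [/eqP eq_M|] //.
by case: ne_M.
Qed.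

Lemma sum_n_indicator_le (P : pred nat) (z : R) (N : nat) : 0 <= z ->
  (forall i j, P i -> P j -> i = j) -> sum_n (fun i => if P i then z else 0) N <= z.
Proof.
move=> z_ge0 P_uniq.
have [/existsP [i0 P_i0] | /existsPn no_P] := boolP [exists i : 'I_N.+1, P i].
  rewrite (sum_n_ext_loc _ (fun i => if i == nat_of_ord i0 then z else zero)).
    by rewrite sum_n_point; [apply: Rle_refl | rewrite -ltnS].
  move=> i _; case: eqP => [->|ne_i]; first by rewrite P_i0.
  by case: ifP => // P_i; case: ne_i; apply: P_uniq.
rewrite (sum_n_ext_loc _ (fun _ => 0)) ?sum_n_const; first by rewrite Rmult_0_r.
move=> i /leP le_iN; have := no_P (Ordinal (le_iN : (i < N.+1)%N)).
by move=> /negbTE /= ->.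
Qed.

Lemma sum_n_mask_leq (r : nat -> R) (Q M : nat) :
  sum_n (fun m => if (m <= Q)%N then 0 else r m) M = sum_n_m r Q.+1 M.
Proof.
elim: M => [|M IH]; first by rewrite sum_O leq0n sum_n_m_zero //; lia.
rewrite sum_Sn IH /plus /=; case: (leqP M.+1 Q) => [le_MQ | lt_QM].
  by rewrite !sum_n_m_zero /zero /=; [lra | apply/ltP; lia | apply/ltP; lia].
by rewrite sum_n_Sm //; apply/leP.
Qed.

Definition rzeta_term (sg : R) (n : nat) : R :=
  if n == 0%N then 0 else Rpower (INR n) (- sg).

Lemma rzeta_term_ge0 (sg : R) (n : nat) : 0 <= rzeta_term sg n.
Proof. by rewrite /rzeta_term; case: eqP => _; [lra | apply: Rlt_le; apply: exp_pos]. Qed.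

Lemma Cmod_ncpow (s : C) (n : nat) : Cmod (ncpow s n) = rzeta_term (Re s) n.
Proof. by rewrite /ncpow /rzeta_term; case: eqP => _; rewrite ?Cmod_0 ?Cmod_cpow. Qed.

(* The telescoping form of (x + 1)^-(t+1) <= \int_x^(x+1) y^-(t+1) dy. *)
Lemma Rpower_step_le (t x : R) : 0 < t -> 1 <= x ->
  Rpower (x + 1) (- (t + 1)) <= (Rpower x (- t) - Rpower (x + 1) (- t)) / t.
Proof.
move=> t_gt0 x_ge1; rewrite /Rpower.
set u := ln x; set v := ln (x + 1).
have exp_u : exp u = x by rewrite /u exp_ln //; lra.
have exp_v : exp v = x + 1 by rewrite /v exp_ln //; lra.
have uv_le : u - v <= - / (x + 1).
  have := exp_ineq1_le (u - v); rewrite /Rminus exp_plus exp_Ropp exp_u exp_v.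
  have -> : x * / (x + 1) = 1 - / (x + 1) by field; lra.
  lra.
set A := exp (- t * v); set B := exp (- t * (u - v)).
have A_gt0 : 0 < A by apply: exp_pos.
have B_ge : 1 + - t * (u - v) <= B by apply: exp_ineq1_le.
have -> : exp (- t * u) = A * B by rewrite /A /B -exp_plus; f_equal; ring.
have -> : exp (- (t + 1) * v) = A / (x + 1).
  by rewrite /A -exp_v /Rdiv -exp_Ropp -exp_plus; f_equal; ring.
have tB : t * / (x + 1) <= B - 1.
  have := Rmult_le_compat_l t _ _ (Rlt_le _ _ t_gt0) uv_le; lra.
apply: (Rmult_le_reg_l t) => //.
have -> : t * ((A * B - A) / t) = A * (B - 1) by field; lra.
have -> : t * (A / (x + 1)) = A * (t * / (x + 1)) by field; lra.
by apply: Rmult_le_compat_l; lra.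
Qed.

Lemma sum_n_rzeta_term_le (sg : R) (N : nat) : 1 < sg -> (0 < N)%N ->
  sum_n (rzeta_term sg) N <= 1 + (1 - Rpower (INR N) (- (sg - 1))) / (sg - 1).
Proof.
move=> sg_gt1; elim: N => [//|[|N] IH _].
  rewrite sum_Sn sum_O /rzeta_term /= /plus /= /Rpower ln_1 !Rmult_0_r exp_0 /Rdiv; lra.
rewrite sum_Sn; change (plus ?a ?b) with (a + b).
have t_gt0 : 0 < sg - 1 by lra.
have x_ge1 : 1 <= INR N.+1 by apply: (le_INR 1); lia.
have := Rpower_step_le t_gt0 x_ge1; have := IH isT.
have -> : rzeta_term sg N.+2 = Rpower (INR N.+1 + 1) (- sg) by rewrite /rzeta_term -S_INR.
rewrite (S_INR N.+1) (_ : sg - 1 + 1 = sg); [lra | ring].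
Qed.

Lemma ex_series_rzeta_term (sg : R) : 1 < sg -> ex_series (rzeta_term sg).
Proof.
move=> sg_gt1; apply: (ex_series_ge0_bounded (M := 1 + 1 / (sg - 1))) => [n|N].
  exact: rzeta_term_ge0.
have inv_gt0 : 0 < / (sg - 1) by apply: Rinv_0_lt_compat; lra.
case: N => [|N].
  by rewrite sum_O /rzeta_term /=; rewrite /Rdiv; lra.
apply: Rle_trans (sum_n_rzeta_term_le (N := N.+1) sg_gt1 isT) _.
have := exp_pos (- (sg - 1) * ln (INR N.+1)); rewrite /Rpower /Rdiv; nra.
Qed.

Lemma ex_series_le_rzeta (r : nat -> R) (sg M : R) : 1 < sg -> (forall n, 0 <= r n) ->
  (forall n, r n <= M * rzeta_term sg n) -> ex_series r.
Proof.
move=> sg_gt1 r_ge0 r_le; apply: (ex_series_le _ (fun n => M * rzeta_term sg n)).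
  by move=> n; change (Rabs (r n) <= M * rzeta_term sg n); rewrite Rabs_pos_eq.
exact: (@ex_series_scal_l R_AbsRing R_NormedModule M _ (ex_series_rzeta_term sg_gt1)).
Qed.

Lemma is_series_C_le (a : nat -> C) (l : C) (t : nat -> R) :
  (forall N, Cmod (sum_n a N - l) <= t N) -> is_lim_seq t 0 -> is_series a l.
Proof.
move=> a_le /is_lim_seq_spec t_lim; apply/filterlim_locally_ball_norm => eps.
apply: filter_imp (t_lim eps) => N; rewrite Rminus_0_r => t_lt.
rewrite /ball_norm; change (Cmod (sum_n a N - l) < eps).
have := a_le N; have := Rle_abs (t N); lra.
Qed.

Lemma is_series_C_unique (a : nat -> C) (l1 l2 : C) :
  is_series a l1 -> is_series a l2 -> l1 = l2.
Proof.
exact: (@filterlim_locally_unique nat C_AbsRing C_NormedModule eventually _ (sum_n a)).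
Qed.

Lemma Cmod_is_series_le (c : nat -> C) (L : C) (B : R) : is_series c L ->
  (forall M, Cmod (sum_n c M) <= B) -> Cmod L <= B.
Proof.
move=> c_L c_le.
have norm_lim : is_lim_seq (fun M => Cmod (sum_n c M)) (Cmod L).
  exact: filterlim_comp c_L (filterlim_norm L).
exact: is_lim_seq_le c_le norm_lim (is_lim_seq_const B).
Qed.

Lemma ex_series_of_Cmod (a : nat -> C) : ex_series (fun n => Cmod (a n)) -> ex_series a.
Proof. by apply: ex_series_le => n; apply: Rle_refl. Qed.

Lemma is_series_point {K : AbsRing} {V : NormedModule K} (M : nat) (c : V) :
  is_series (fun m => if m == M then c else zero) c.
Proof.
apply: (filterlim_ext_loc (fun _ => c)); last exact: filterlim_const.
by exists M => N /leP le_MN; rewrite sum_n_point.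
Qed.

Lemma is_series_C0 : is_series (fun _ : nat => RtoC 0) (RtoC 0).
Proof.
by apply: is_series_ext (@is_series_point C_AbsRing C_NormedModule 0 (RtoC 0)) => m; case: eqP.
Qed.

Lemma is_series_succ {K : AbsRing} {V : NormedModule K} (a : nat -> V) (l : V) :
  a 0%N = zero -> is_series a l -> is_series (fun n => a n.+1) l.
Proof. by move=> a0 a_l; apply: is_series_incr_1; rewrite a0 plus_zero_r. Qed.

Lemma is_series_geom_C (x : C) : Cmod x < 1 ->
  is_series (fun j => Cpow x j.+1) (x / (1 - x))%C.
Proof.
move=> x_lt1.
have x_ne1 : (1 - x)%C <> 0%C.
  move=> x_eq1; have : x = 1%C by rewrite -[x]Cplus_0_l -x_eq1; ring.
  by move=> x1; move: x_lt1; rewrite x1 Cmod_1; lra.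
have partial N : sum_n (fun j => Cpow x j.+1) N = ((x - Cpow x N.+2) / (1 - x))%C.
  elim: N => [|N IH]; first by rewrite sum_O /=; field.
  by rewrite sum_Sn IH /plus /=; field.
apply: (is_series_C_le (t := fun N => Cmod x ^ N.+2 / Cmod (1 - x))) => [N|].
  rewrite partial (_ : (_ - _)%C = - (Cpow x N.+2 / (1 - x)))%C; last by field.
  by rewrite Cmod_opp Cmod_div // Cmod_pow; apply: Rle_refl.
have geom := is_lim_seq_geom (Cmod x) ltac:(rewrite Rabs_pos_eq //; exact: Cmod_ge_0).
have := is_lim_seq_scal_r _ (/ Cmod (1 - x)) _ (proj1 (is_lim_seq_incr_n _ 2 0) geom).
rewrite /= Rmult_0_l; apply: is_lim_seq_ext => n.
by rewrite (_ : (n + 2)%coq_nat = n.+2) //; lia.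
Qed.

Lemma geom_sum_inv (x y : C) : (y * x)%C = 1%C -> Cmod x < 1 ->
  (x / (1 - x))%C = (1 / (y - 1))%C.
Proof.
move=> yx x_lt1.
have x_ne1 : (1 - x)%C <> RtoC 0.
  move=> x_eq1; have : x = RtoC 1 by rewrite -[x]Cplus_0_l -x_eq1; ring.
  by move=> x1; move: x_lt1; rewrite x1 Cmod_1; lra.
have x_ne0 : x <> RtoC 0 by move=> x0; move: yx; rewrite x0 Cmult_0_r => /RtoC_inj; lra.
have E : (1 - x)%C = ((y - 1) * x)%C by transitivity (y * x - x)%C; [rewrite yx | ring].
have y_ne1 : (y - 1)%C <> RtoC 0 by move=> y1; apply: x_ne1; rewrite E y1 Cmult_0_l.
by rewrite E; field.
Qed.

Lemma sum_n_dilate {G : AbelianMonoid} (b : nat -> G) (d N : nat) : (0 < d)%N ->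
  sum_n (fun n => if d %| n then b (n %/ d) else zero) N = sum_n b (N %/ d).
Proof.
move=> d_gt0; elim: N => [|N IH]; first by rewrite sum_O div0n sum_O dvdn0.
rewrite sum_Sn IH divnS //; case: (d %| N.+1); last by rewrite plus_zero_r.
by rewrite add1n sum_Sn.
Qed.

Lemma filterlim_divn (d : nat) : (0 < d)%N -> filterlim (fun N => N %/ d) eventually eventually.
Proof.
move=> d_gt0 P [M PM]; exists (M * d)%N => N /leP le_N; apply: PM; apply/leP.
by rewrite leq_divRL.
Qed.

Lemma is_series_dilate {K : AbsRing} {V : NormedModule K} (b : nat -> V) (B : V) (d : nat) :
  (0 < d)%N -> is_series b B -> is_series (fun n => if d %| n then b (n %/ d) else zero) B.
Proof.
move=> d_gt0 b_B; apply: (filterlim_ext (fun N => sum_n b (N %/ d))).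
  by move=> N; rewrite sum_n_dilate.
exact: filterlim_comp (filterlim_divn d_gt0) b_B.
Qed.

Lemma is_series_sum_n {K : AbsRing} {V : NormedModule K} (u : nat -> nat -> V) (U : nat -> V) :
  (forall p, is_series (u p) (U p)) ->
  forall Q, is_series (fun m => sum_n (fun p => u p m) Q) (sum_n U Q).
Proof.
move=> u_U; elim=> [|Q IH].
  by rewrite sum_O; apply: is_series_ext (u_U 0%N) => m; rewrite sum_O.
rewrite sum_Sn; apply: is_series_ext (is_series_plus _ _ _ _ IH (u_U Q.+1)) => m.
by rewrite sum_Sn.
Qed.

Lemma ex_series_diag (u : nat -> nat -> C) :
  ex_series (fun m => sum_n (fun p => Cmod (u p m)) m) ->
  ex_series (fun m => sum_n (fun p => u p m) m).
Proof. by move=> u_abs; apply: (ex_series_le _ _ _ u_abs) => m; apply: norm_sum_n_m. Qed.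

(** * Interchanging the order of summation *)

(* Fubini's theorem for a double series vanishing above the diagonal (u p m = 0 for p > m):
   the rows, summed as [sum_n (fun p => u p m) m], and the columns [U p] have the same total. *)
Section TriangularSwap.

Variables (u : nat -> nat -> C) (U : nat -> C) (W : C).
Hypothesis u_triangular : forall p m, (m < p)%N -> u p m = 0%C.
Hypothesis u_U : forall p, is_series (u p) (U p).
Hypothesis u_abs : ex_series (fun m => sum_n (fun p => Cmod (u p m)) m).
Hypothesis diag_W : is_series (fun m => sum_n (fun p => u p m) m) W.

Let r (m : nat) : R := sum_n (fun p => Cmod (u p m)) m.

Let r_ge0 (m : nat) : 0 <= r m.
Proof. by apply: sum_n_m_ge0 => p; apply: Cmod_ge_0. Qed.

Let column_diff_le (Q m : nat) :
  Cmod (sum_n (fun p => u p m) Q - sum_n (fun p => u p m) m) <= if (m <= Q)%N then 0 else r m.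
Proof.
set col := fun p => u p m.
change (norm (minus (sum_n col Q) (sum_n col m)) <= if (m <= Q)%N then 0 else r m).
have [le_mQ | lt_Qm] := leqP m Q.
  rewrite -sum_n_m_sum_n; last exact/leP.
  rewrite (sum_n_m_ext_loc _ (fun _ => zero)) ?sum_n_m_const_zero ?norm_zero; first exact: Rle_refl.
  by move=> p [/leP lt_mp _]; apply: u_triangular.
rewrite -opp_minus -sum_n_m_sum_n; last by apply/leP; apply: ltnW.
rewrite norm_opp /r (sum_n_split _ (ltnW lt_Qm)).
apply: Rle_trans (norm_sum_n_m _ _ _) _.
by have := sum_n_m_ge0 0 Q (fun p => Cmod_ge_0 (u p m)); rewrite /norm /= /col /sum_n; lra.
Qed.

(* The first Q + 1 columns differ from the row series only by entries with m > Q, whose total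
   modulus is the tail of [r]. *)
Let partial_tail_le (Q : nat) : Cmod (sum_n U Q - W) <= Series r - sum_n r Q.
Proof.
apply: (Cmod_is_series_le (is_series_minus _ _ _ _ (is_series_sum_n (Q := Q) u_U) diag_W)) => M.
apply: Rle_trans (@norm_sum_n_m C_AbsRing C_NormedModule _ _ _) _.
apply: Rle_trans (sum_n_m_le _ _ 0 M (column_diff_le Q)) _.
by rewrite -/(sum_n _ M) sum_n_mask_leq; apply: sum_n_m_le_tail.
Qed.

Lemma is_series_triangular_swap : is_series U W.
Proof.
apply: (is_series_C_le partial_tail_le).
exact: is_lim_seq_Series_tail.
Qed.

End TriangularSwap.

(** * Products of Dirichlet series *)

Lemma ex_series_dirichlet_conv_ge0 (ra rb : nat -> R) :
  ra 0%N = 0 -> rb 0%N = 0 -> (forall n, 0 <= ra n) -> (forall n, 0 <= rb n) ->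
  ex_series ra -> ex_series rb -> ex_series (dirichlet_conv ra rb).
Proof.
move=> ra0 rb0 ra_ge0 rb_ge0 ra_sum rb_sum.
have SB_ge0 : 0 <= Series rb by apply: Rle_trans (sum_n_le_Series 0 rb_ge0 rb_sum); rewrite sum_O.
apply: (ex_series_ge0_bounded (M := Series ra * Series rb)) => [n|N].
  apply: sum_n_m_ge0 => d; case: ifP => _; last exact: Rle_refl.
  exact: Rmult_le_pos.
rewrite (sum_n_dirichlet_conv ra0 rb0).
apply: Rle_trans (_ : sum_n (fun d => ra d * Series rb) N <= _).
  by apply: sum_n_m_le => d; apply: Rmult_le_compat_l => //; apply: sum_n_le_Series.
rewrite (@sum_n_mult_r R_Ring); apply: Rmult_le_compat_r => //.
exact: sum_n_le_Series.
Qed.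

(* The double series u d n = a d * b (n / d) (for d | n) has rows (a * b) n and columns
   a d * B, the column being a dilation of the series of b. *)
Section DirichletProduct.

Variables (a b : nat -> C) (A B : C).
Hypotheses (a0 : a 0%N = 0%C) (b0 : b 0%N = 0%C).
Hypotheses (a_A : is_series a A) (b_B : is_series b B).
Hypotheses (a_abs : ex_series (fun n => Cmod (a n))) (b_abs : ex_series (fun n => Cmod (b n))).

Let u (d n : nat) : C := if d %| n then (a d * b (n %/ d))%C else 0%C.

Let u_triangular (d n : nat) : (n < d)%N -> u d n = 0%C.
Proof.
rewrite /u; case: (boolP (d %| n)) => // d_dvd lt_nd.
have -> : n = 0%N by apply/eqP; apply: contraLR lt_nd; rewrite -leqNgt -lt0n => /dvdn_leq; apply.
by rewrite div0n b0 Cmult_0_r.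
Qed.

Let u_series (d : nat) : is_series (u d) (a d * B)%C.
Proof.
rewrite -[(a d * B)%C]/(scal (a d) B); case: d => [|d].
  apply: is_series_ext (@is_series_scal_l C_AbsRing C_NormedModule (a 0%N) _ _ b_B) => n.
  by rewrite /u a0 scal_zero_l; case: ifP => _; rewrite ?Cmult_0_l.
apply: is_series_ext (@is_series_scal_l C_AbsRing C_NormedModule (a d.+1) _ _
  (is_series_dilate (ltn0Sn d) b_B)) => n.
by rewrite /u; case: ifP => _; rewrite ?scal_zero_r.
Qed.

Let u_abs : ex_series (fun n => sum_n (fun d => Cmod (u d n)) n).
Proof.
have Ca0 : Cmod (a 0%N) = 0 by rewrite a0 Cmod_0.
have Cb0 : Cmod (b 0%N) = 0 by rewrite b0 Cmod_0.
have := ex_series_dirichlet_conv_ge0 Ca0 Cb0 (fun n => Cmod_ge_0 (a n)) (fun n => Cmod_ge_0 (b n))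
  a_abs b_abs.
apply: ex_series_ext => n; apply: sum_n_ext => d; rewrite /u; case: ifP => _.
  by rewrite Cmod_mult.
by rewrite Cmod_0.
Qed.

Lemma ex_series_Cmod_dirichlet_conv : ex_series (fun n => Cmod (dirichlet_conv a b n)).
Proof.
apply: (ex_series_le _ _ _ u_abs) => n.
change (Rabs (Cmod (dirichlet_conv a b n)) <= sum_n (fun d => Cmod (u d n)) n).
rewrite Rabs_pos_eq; last exact: Cmod_ge_0.
exact: (@norm_sum_n_m C_AbsRing C_NormedModule (fun d => u d n) 0 n).
Qed.

Lemma is_series_dirichlet_conv : is_series (dirichlet_conv a b) (A * B)%C.
Proof.
have [W diag_W] := ex_series_diag u_abs.
have AB_W := is_series_triangular_swap u_triangular u_series u_abs diag_W.
have BA : is_series (fun d => a d * B)%C (scal B A).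
  apply: is_series_ext (@is_series_scal_l C_AbsRing C_NormedModule B _ _ a_A) => d.
  exact: Cmult_comm.
by rewrite Cmult_comm -[(B * A)%C]/(scal B A) (is_series_C_unique BA AB_W).
Qed.

End DirichletProduct.

(** * The Dirichlet series of the prime powers *)

Lemma POmega_term_prime (s : C) (p : nat) : prime p ->
  POmega_term s p = (1 / (cpow (INR p) s - 1))%C.
Proof. by move=> pr_p; rewrite /POmega_term pr_p Omega_prime. Qed.

(* [term p j m] is m^-s at m = p^(j+1).  The columns j of a prime p sum to a geometric series,
   P_Omega's term 1/(p^s - 1); the rows, summed over p, give the Dirichlet series of the prime
   powers. *)
Section PrimePowerSeries.

Variable s : C.
Hypothesis Re_s_gt1 : 1 < Re s.

Let term (p j m : nat) : C := if m == (p ^ j.+1)%N then ncpow s m else RtoC 0.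

Let column (p m : nat) : C := if prime p then sum_n (fun j => term p j m) m else RtoC 0.

Let term_abs (p m : nat) : prime p -> sum_n (fun j => Cmod (term p j m)) m <= rzeta_term (Re s) m.
Proof.
move=> pr_p.
rewrite (sum_n_ext _ (fun j => if m == (p ^ j.+1)%N then rzeta_term (Re s) m else 0)); last first.
  by move=> j; rewrite /term; case: ifP => _; rewrite ?Cmod_ncpow ?Cmod_0.
apply: sum_n_indicator_le; first exact: rzeta_term_ge0.
by move=> i j /eqP -> /eqP /eqP; rewrite eqn_exp2l ?prime_gt1 // eqSS => /eqP.
Qed.

Let is_series_prime_power_column (p : nat) : prime p ->
  is_series (fun m => sum_n (fun j => term p j m) m) (POmega_term s p).
Proof.
move=> pr_p.
have p_gt0 : 0 < INR p by apply: lt_0_INR; apply/ltP; apply: prime_gt0.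
have p_gt1 : 1 < INR p by apply: (lt_INR 1); apply/ltP; apply: prime_gt1.
set x := cpow (INR p) (- s).
have x_lt1 : Cmod x < 1.
  rewrite /x Cmod_cpow /Rpower -exp_0; apply: exp_increasing.
  have : 0 < ln (INR p) by rewrite -ln_1; apply: ln_increasing; lra.
  change (Re (- s)%C) with (- Re s); nra.
have term_series j : is_series (term p j) (Cpow x j.+1).
  have -> : Cpow x j.+1 = ncpow s (p ^ j.+1)%N.
    by rewrite /ncpow expn_eq0 eqn0Ngt prime_gt0 //= INR_expn cpowX.
  apply: is_series_ext (@is_series_point C_AbsRing C_NormedModule (p ^ j.+1)%N _) => m.
  by rewrite /term; case: eqP => [->|].
have term_triangular j m : (m < j)%N -> term p j m = RtoC 0.
  move=> lt_mj; rewrite /term; case: eqP => // def_m.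
  by have := ltn_expl j.+1 (prime_gt1 pr_p); rewrite -def_m; lia.
have term_abs_sum : ex_series (fun m => sum_n (fun j => Cmod (term p j m)) m).
  apply: (@ex_series_le_rzeta _ (Re s) 1) => // m.
    by apply: sum_n_m_ge0 => j; apply: Cmod_ge_0.
  by rewrite Rmult_1_l; apply: term_abs.
have [W diag_W] := ex_series_diag term_abs_sum.
have x_W := is_series_triangular_swap term_triangular term_series term_abs_sum diag_W.
rewrite POmega_term_prime // -(geom_sum_inv (cpow_mul_opp _ s) x_lt1).
by rewrite (is_series_C_unique (is_series_geom_C x_lt1) x_W).
Qed.

Let column_eq0 (p m : nat) : ((m < p)%N || (primes m != [:: p])) -> column p m = RtoC 0.
Proof.
rewrite /column; case: (boolP (prime p)) => // pr_p small_or_other.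
rewrite (sum_n_ext _ (fun _ => zero)) /sum_n ?sum_n_m_const_zero // => j.
rewrite /term; case: eqP => // def_m; move: small_or_other; rewrite def_m primesX //.
by rewrite primes_prime // eqxx orbF ltnNge -{1}(expn1 p) leq_exp2l ?prime_gt1.
Qed.

Let column_abs (m : nat) : sum_n (fun p => Cmod (column p m)) m <= rzeta_term (Re s) m.
Proof.
apply: Rle_trans (_ : sum_n (fun p => if primes m == [:: p] then rzeta_term (Re s) m else 0) m <= _).
  apply: sum_n_m_le => p; case: ifP => [_|/negbT other].
    rewrite /column; case: ifP => [pr_p|_]; last by rewrite Cmod_0; apply: rzeta_term_ge0.
    apply: Rle_trans _ (@term_abs p m pr_p).
    exact: (@norm_sum_n_m C_AbsRing C_NormedModule (fun j => term p j m) 0 m).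
  by rewrite column_eq0 ?other ?orbT // Cmod_0; apply: Rle_refl.
apply: sum_n_indicator_le; first exact: rzeta_term_ge0.
by move=> p q /eqP -> /eqP [].
Qed.

Let sum_column (m : nat) :
  sum_n (fun p => column p m) m = dirichlet s (fun m => INR (prime_power_count m)) m.
Proof.
rewrite /dirichlet /prime_power_count.
rewrite -(sum_n_INR prime (fun p => \sum_(j < m.+1) nat_of_bool (m == p ^ j.+1)%N)).
rewrite RtoC_sum_n sum_n_Cmult_r.
apply: sum_n_ext => p; rewrite /column; case: ifP => pr_p; last by rewrite Cmult_0_l.
rewrite -(sum_n_INR predT (fun j => nat_of_bool (m == p ^ j.+1)%N)) RtoC_sum_n sum_n_Cmult_r.
by apply: sum_n_ext => j; rewrite /term; case: eqP => _ /=; rewrite ?Cmult_1_l ?Cmult_0_l.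
Qed.

Lemma Cmod_dirichlet_prime_power_count_le (m : nat) :
  Cmod (dirichlet s (fun m => INR (prime_power_count m)) m) <= rzeta_term (Re s) m.
Proof.
rewrite -sum_column.
exact: Rle_trans (@norm_sum_n_m C_AbsRing C_NormedModule (fun p => column p m) 0 m) (column_abs m).
Qed.

Lemma is_series_prime_power_count : exists W,
  is_series (dirichlet s (fun m => INR (prime_power_count m))) W /\ is_series (POmega_term s) W.
Proof.
have column_series p : is_series (column p) (POmega_term s p).
  case: (boolP (prime p)) => pr_p.
    by apply: is_series_ext (is_series_prime_power_column pr_p) => m; rewrite /column pr_p.
  rewrite /POmega_term (negbTE pr_p).
  by apply: is_series_ext is_series_C0 => m; rewrite /column (negbTE pr_p).
have column_abs_sum : ex_series (fun m => sum_n (fun p => Cmod (column p m)) m).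
  apply: (@ex_series_le_rzeta _ (Re s) 1) => // m.
    by apply: sum_n_m_ge0 => p; apply: Cmod_ge_0.
  by rewrite Rmult_1_l; apply: column_abs.
have [W diag_W] := ex_series_diag column_abs_sum.
have column_triangular p m : (m < p)%N -> column p m = RtoC 0.
  by move=> lt_mp; apply: column_eq0; rewrite lt_mp.
exists W; split.
  by apply: is_series_ext diag_W => m; apply: sum_column.
exact: is_series_triangular_swap column_triangular column_series column_abs_sum diag_W.
Qed.

End PrimePowerSeries.

Lemma dirichlet_prime_rpow (k : R) (s : C) (n : nat) :
  dirichlet s (prime_rpow k) n = primezeta_term (s - RtoC k)%C n.
Proof.
rewrite /dirichlet /prime_rpow /primezeta_term; case: ifP => pr_n; last by rewrite Cmult_0_l.
rewrite /ncpow eqn0Ngt prime_gt0 //= cpow_opp_sub_real //.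
by apply: lt_0_INR; apply/ltP; apply: prime_gt0.
Qed.

Lemma Cmod_primezeta_term_le (s : C) (n : nat) : Cmod (primezeta_term s n) <= rzeta_term (Re s) n.
Proof.
rewrite /primezeta_term; case: ifP => pr_n; last by rewrite Cmod_0; apply: rzeta_term_ge0.
by rewrite /rzeta_term eqn0Ngt prime_gt0 //= Cmod_cpow; apply: Rle_refl.
Qed.

Lemma dirichlet_delta1_add (s : C) (c : nat -> nat) (n : nat) :
  dirichlet s (fun m => INR ((m == 1%N) + c m)) n
  = (dirichlet s (fun m => INR (c m)) n + (if n == 1%N then RtoC 1 else RtoC 0))%C.
Proof.
rewrite /dirichlet plus_INR RtoC_plus; case: eqP => [->|_] /=; last by ring.
by rewrite /ncpow /= cpow1l; ring.
Qed.

Lemma lhs_term_dirichlet_conv (k : R) (s : C) (n : nat) :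
  lhs_term k s n = dirichlet_conv (dirichlet s (prime_rpow k))
    (dirichlet_conv (dirichlet s (fun _ => 1)) (dirichlet s delta1_prime_power)) n.+1.
Proof.
rewrite (eq_dirichlet_conv _ n.+1 (dirichlet_conv_dirichlet s _ _)) dirichlet_conv_dirichlet.
rewrite /dirichlet dirichlet_conv_prime_rpow //.
exact: dirichlet_conv_one_delta1_prime_power.
Qed.

Lemma ex_series_Cmod_dirichlet1 (s : C) : 1 < Re s ->
  ex_series (fun n => Cmod (dirichlet s (fun _ => 1) n)).
Proof.
move=> s_gt1; apply: (@ex_series_le_rzeta _ (Re s) 1) => // n; first exact: Cmod_ge_0.
by rewrite /dirichlet Cmod_mult Cmod_1 !Rmult_1_l Cmod_ncpow; apply: Rle_refl.
Qed.

Lemma ex_series_Cmod_dirichlet_prime_rpow (k : R) (s : C) : 1 < Re s - k ->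
  ex_series (fun n => Cmod (dirichlet s (prime_rpow k) n)).
Proof.
move=> sk_gt1; apply: (@ex_series_le_rzeta _ (Re s - k) 1) => // n; first exact: Cmod_ge_0.
by rewrite dirichlet_prime_rpow Rmult_1_l; apply: Cmod_primezeta_term_le.
Qed.

Lemma is_series_dirichlet_delta1_prime_power (s : C) : 1 < Re s ->
  exists PO, [/\ is_series (POmega_term s) PO,
    is_series (dirichlet s delta1_prime_power) (PO + 1)%C &
    ex_series (fun n => Cmod (dirichlet s delta1_prime_power n))].
Proof.
move=> s_gt1; have [PO [pp_PO POmega_PO]] := is_series_prime_power_count s_gt1.
exists PO; split => //.
  apply: is_series_ext (is_series_plus _ _ _ _ pp_PO
    (@is_series_point C_AbsRing C_NormedModule 1 (RtoC 1))) => n.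
  by rewrite /delta1_prime_power dirichlet_delta1_add.
apply: (@ex_series_le_rzeta _ (Re s) 2) => // n; first exact: Cmod_ge_0.
rewrite /delta1_prime_power dirichlet_delta1_add; apply: Rle_trans (Cmod_triangle _ _) _.
have := Cmod_dirichlet_prime_power_count_le s n; have := rzeta_term_ge0 (Re s) n.
case: eqP => [->|_]; rewrite ?Cmod_1 ?Cmod_0; last lra.
by rewrite /rzeta_term /= /Rpower ln_1 Rmult_0_r exp_0; lra.
Qed.

Theorem theorem4p2 (k : R) (s : C) :
  (Rmax 1 (1 + k) < Re s)%R ->
  exists Z PP PO : C,
    is_series (zeta_term s) Z /\
    is_series (primezeta_term (s - RtoC k)%C) PP /\
    is_series (POmega_term s) PO /\
    is_series (lhs_term k s) (Z * PP * (PO + 1))%C.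
Proof.
move=> Re_s_gt.
have s_gt1 : 1 < Re s by have := Rmax_l 1 (1 + k); lra.
have sk_gt1 : 1 < Re s - k by have := Rmax_r 1 (1 + k); lra.
have [PO [POmega_PO f_PO1 f_abs]] := is_series_dirichlet_delta1_prime_power s_gt1.
have z_abs := ex_series_Cmod_dirichlet1 s_gt1.
have pk_abs := ex_series_Cmod_dirichlet_prime_rpow sk_gt1.
have [Z z_Z] := ex_series_of_Cmod z_abs.
have [PP pk_PP] := ex_series_of_Cmod pk_abs.
have zf_ZPO := is_series_dirichlet_conv (dirichlet0 _ _) (dirichlet0 _ _) z_Z f_PO1 z_abs f_abs.
have zf_abs := ex_series_Cmod_dirichlet_conv (dirichlet0 _ _) (dirichlet0 _ _) z_abs f_abs.
have zf0 := dirichlet_conv0 (dirichlet s delta1_prime_power) (dirichlet0 s (fun _ => 1)).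
have lhs := is_series_dirichlet_conv (dirichlet0 _ _) zf0 pk_PP zf_ZPO pk_abs zf_abs.
exists Z, PP, PO; split; [|split; [|split]] => //.
- apply: is_series_ext (is_series_succ (dirichlet0 _ _) z_Z) => n.
  by rewrite /dirichlet /ncpow Cmult_1_l.
- by apply: is_series_ext pk_PP => n; rewrite dirichlet_prime_rpow.
rewrite (_ : (Z * PP * (PO + 1))%C = (PP * (Z * (PO + 1)))%C); last by ring.
apply: is_series_ext (is_series_succ (dirichlet_conv0 _ (dirichlet0 _ _)) lhs) => n.
by rewrite lhs_term_dirichlet_conv.
Qed.
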